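(* Let $X$ be a super $X$-set parameter and let $G$ be a graph. If an $X$-set $S$ of $G$ is a cut-vertex of $\mathfrak{X}(G)$, then $S=V(G)$.
   Context: All graphs are finite, simple, undirected, with nonempty vertex set. A super $X$-set parameter $X$ assigns to each graph $G$ a family of subsets of $V(G)$, called the $X$-sets of $G$, such that: every graph isomorphism maps $X$-sets to $X$-sets; every graph has at least one $X$-set; and (Superset) if $S$ is an $X$-set of $G$ and $S\subseteq S'\subseteq V(G)$, then $S'$ is an $X$-set of $G$. The $X$-TAR graph $\mathfrak{X}(G)$ has as vertices the $X$-sets of $G$, with $S_1S_2$ an edge iff $|S_1\ominus S_2|=1$ ($\ominus$ = symmetric difference). *)

From mathcomp Require Import all_boot.
Set Implicit Arguments. Unset Strict Implicit. Unset Printing Implicit Defensive.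

Definition simple_graph (T : finType) (e : rel T) : Prop :=
  [/\ irreflexive e, symmetric e & 0 < #|T|].

(* A graph parameter: to each graph (T, e) it assigns the family of its X-sets,
   given by a boolean predicate on {set T}. *)
Definition graph_param := forall T : finType, rel T -> {set T} -> bool.

Definition super_param (X : graph_param) : Prop :=
  (forall (T1 T2 : finType) (e1 : rel T1) (e2 : rel T2) (f : T1 -> T2),
      simple_graph e1 -> simple_graph e2 -> bijective f ->
      (forall x y, e2 (f x) (f y) = e1 x y) ->
      forall S : {set T1}, X T1 e1 S = X T2 e2 (f @: S))
  /\
  (forall (T : finType) (e : rel T), simple_graph e -> exists S, X T e S)
  /\
  (forall (T : finType) (e : rel T), simple_graph e ->
      forall S S' : {set T}, X T e S -> S \subset S' -> X T e S').

(* The X-TAR graph of (T,e): vertex set = X-sets, adjacency = symmetric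
   difference of size one. *)
Definition tar_vertices (X : graph_param) (T : finType) (e : rel T) : {set {set T}} :=
  [set S | X T e S].

Definition tar_adj (T : finType) : rel {set T} :=
  fun S1 S2 => #|(S1 :\: S2) :|: (S2 :\: S1)| == 1.

Definition induced_rel (U : finType) (r : rel U) (W : {set U}) : rel U :=
  fun x y => [&& x \in W, y \in W & r x y].

Definition ncomp (U : finType) (r : rel U) (W : {set U}) : nat :=
  n_comp (induced_rel r W) (mem W).

Definition cut_vertex (U : finType) (r : rel U) (W : {set U}) (v : U) : Prop :=
  v \in W /\ ncomp r W < ncomp r (W :\ v).

From mathcomp Require Import all_boot.

Set Implicit Arguments.
Unset Strict Implicit.
Unset Printing Implicit Defensive.

(* If S misses a vertex v, then S' |-> v |: S' moves every TAR-neighbour of S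
   to a set that is equal or adjacent to v |: S, while staying an X-set
   different from S.  So the neighbourhood of S is connected in X(G) - S, and a
   vertex with connected neighbourhood is never a cut-vertex. *)

Lemma induced_rel_sym (U : finType) (r : rel U) (W : {set U}) :
  symmetric r -> symmetric (induced_rel r W).
Proof. by move=> sr x y; rewrite /induced_rel sr andbCA. Qed.

Lemma induced_rel_closed (U : finType) (r : rel U) (W : {set U}) :
  symmetric r -> closed (induced_rel r W) (mem W).
Proof.
move=> sr; apply: intro_closed; first exact/sym_connect_sym/induced_rel_sym.
by move=> x y /and3P[].
Qed.

Section ConnectedNeighbourhood.

Variables (U : finType) (r : rel U) (W : {set U}) (s : U).
Hypothesis sym_r : symmetric r.

Let G := induced_rel r W.
Let H := induced_rel r (W :\ s).

Hypothesis nbhd_connected :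
  {in W :\ s &, forall x y, r s x -> r s y -> connect H x y}.

Lemma connect_induced_setD1 x y : x \in W :\ s -> y \in W :\ s ->
  connect G x y -> connect H x y.
Proof.
move=> xWs yWs xy.
pose D := [pred z | connect H x z ||
  (z == s) && [exists n, [&& n \in W :\ s, r s n & connect H x n]]].
have closedD : closed G D.
  apply: intro_closed; first exact/sym_connect_sym/induced_rel_sym.
  move=> z w /and3P[zW wW zw] /orP[xz | /andP[/eqP zs /existsP[n /and3P[nWs sn xn]]]].
    have zWs : z \in W :\ s.
      by rewrite -(closed_connect (induced_rel_closed sym_r) xz).
    have [ws | wNs] := eqVneq w s.
      by apply/orP; right; rewrite ws eqxx; apply/existsP; exists z;
        rewrite zWs -ws sym_r zw.
    apply/orP; left; apply: connect_trans xz (connect1 _).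
    by rewrite /H /induced_rel zWs !inE wNs wW.
  have [ws | wNs] := eqVneq w s.
    by apply/orP; right; rewrite ws eqxx; apply/existsP; exists n; rewrite nWs sn.
  have wWs : w \in W :\ s by rewrite !inE wNs.
  apply/orP; left; apply: connect_trans xn (nbhd_connected nWs wWs sn _).
  by rewrite -zs.
have : y \in D by rewrite -(closed_connect closedD xy) inE connect0.
case/orP=> [// | /andP[/eqP ys _]].
by move: yWs; rewrite ys setD11.
Qed.

Lemma ncomp_setD1_le : ncomp r (W :\ s) <= ncomp r W.
Proof.
have symG : connect_sym G by exact/sym_connect_sym/induced_rel_sym.
have symH : connect_sym H by exact/sym_connect_sym/induced_rel_sym.
rewrite /ncomp /n_comp_mem; set rootsH := predI _ _.
have -> : #|rootsH| = #|[set root G z | z in rootsH]|.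
  apply/esym/card_in_imset => z1 z2 /andP[/eqP rz1 z1Ws] /andP[/eqP rz2 z2Ws] rG.
  rewrite -rz1 -rz2; apply/(rootP symH)/connect_induced_setD1 => //.
  exact/(rootP symG).
apply/subset_leq_card/subsetP => _ /imsetP[z /andP[_ zWs] ->].
rewrite inE roots_root //=.
rewrite -(closed_connect (induced_rel_closed sym_r) (connect_root _ z)).
by case/setD1P: zWs.
Qed.

Lemma not_cut_vertex : ~ cut_vertex r W s.
Proof. by case=> _; rewrite ltnNge ncomp_setD1_le. Qed.

End ConnectedNeighbourhood.

Lemma tar_adj_sym (T : finType) : symmetric (@tar_adj T).
Proof. by move=> A B; rewrite /tar_adj setUC. Qed.

Lemma tar_adj_setU1 (T : finType) (v : T) (A : {set T}) :
  v \notin A -> tar_adj A (v |: A).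
Proof.
move=> vNA; rewrite /tar_adj (_ : _ :|: _ = [set v]) ?cards1 //.
apply/setP => x; rewrite !inE.
by have [-> | _] := eqVneq x v; rewrite ?vNA //=; case: (x \in A).
Qed.

Lemma tar_adj_setU1r (T : finType) (v : T) (A B : {set T}) :
  tar_adj A B -> v |: A = v |: B \/ tar_adj (v |: A) (v |: B).
Proof.
move=> /eqP cardAB.
have : #|((v |: A) :\: (v |: B)) :|: ((v |: B) :\: (v |: A))| <= 1.
  rewrite -cardAB; apply/subset_leq_card/subsetP => x; rewrite !inE.
  by case: (x == v); case: (x \in A); case: (x \in B).
rewrite leq_eqVlt ltnS leqn0 cards_eq0 setU_eq0 !setD_eq0.
case/orP=> [adj | /andP[AB BA]]; [by right | left].
by apply/eqP; rewrite eqEsubset AB BA.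
Qed.

Section TarNeighbourhood.

Variables (X : graph_param) (T : finType) (e : rel T).

Let W := tar_vertices X e.

Hypothesis W_superset : forall N N' : {set T}, N \in W -> N \subset N' -> N' \in W.
Variables (S : {set T}) (v : T).
Hypotheses (SW : S \in W) (vNS : v \notin S).

Let H := induced_rel (@tar_adj T) (W :\ S).

Lemma setU1_tar_vertex (N : {set T}) : N \in W -> v |: N \in W :\ S.
Proof.
move=> NW; rewrite in_setD1 (W_superset NW (subsetUr _ _)) andbT.
by apply: contraNneq vNS => <-; rewrite setU11.
Qed.

Lemma tar_nbr_connect (N : {set T}) : N \in W :\ S -> tar_adj S N ->
  connect H N (v |: S).
Proof.
move=> NWs SN.
have SvW := setU1_tar_vertex SW.
have NvW : v |: N \in W :\ S by apply/setU1_tar_vertex; case/setD1P: NWs.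
apply: (connect_trans (y := v |: N)).
  have [vN | vNN] := boolP (v \in N); first by rewrite (setUidPr _) ?sub1set.
  by apply: connect1; rewrite /H /induced_rel NWs NvW tar_adj_setU1.
have [-> | adj] := tar_adj_setU1r v SN; first exact: connect0.
by apply: connect1; rewrite /H /induced_rel NvW SvW tar_adj_sym.
Qed.

End TarNeighbourhood.

Theorem proposition2p43 (X : graph_param) (T : finType) (e : rel T)
    (S : {set T}) :
  super_param X -> simple_graph e -> X T e S ->
  cut_vertex (@tar_adj T) (tar_vertices X e) S ->
  S = [set: T].
Proof.
move=> [_ [_ X_superset]] sg _ cutS; have [SW _] := cutS.
have W_superset (N N' : {set T}) : N \in tar_vertices X e -> N \subset N' ->
    N' \in tar_vertices X e.
  by rewrite !inE => XN; apply: X_superset XN.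
apply/setP => v; rewrite inE; apply/negPn/negP => vNS.
have symH := sym_connect_sym (induced_rel_sym (tar_vertices X e :\ S) (@tar_adj_sym T)).
apply: (not_cut_vertex (@tar_adj_sym T) _ cutS) => M N MWs NWs SM SN.
have hub := tar_nbr_connect W_superset SW vNS.
by apply: connect_trans (hub _ MWs SM) _; rewrite symH hub.
Qed.
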